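(* Let $X=X_\Sigma$ be the toric manifold described in the context, and let $S_1$ be the torus invariant surface associated to the $(d-2)$-dimensional cone of $\Sigma$ generated by all ray generators except $v_1,y_1,z_1,t_1,u_1$. Then $$2(\mathrm{ch}_2(X)\cdot S_1)=-p_1-p_4+b_1p_2-2(c_2+\cdots+c_{p_2})-(b_1+1)+\sum_{i=2}^{p_3}\bigl(b_1-2b_i-1\bigr).$$
   Context: Let $N=\mathbb{Z}^d$ and let $\Sigma$ be a smooth projective complete fan in $N_\mathbb{R}$ whose set of primitive ray generators is $\{v_1,\dots,v_{p_0},y_1,\dots,y_{p_1},z_1,\dots,z_{p_2},t_1,\dots,t_{p_3},u_1,\dots,u_{p_4}\}$, where $p_0,\dots,p_4$ are positive integers with $p_0+p_1+p_2+p_3+p_4-3=d$. A primitive collection is a set of ray generators not generating a cone of $\Sigma$ while every proper subset does. The primitive collections of $\Sigma$ are exactly $\{v_i\}\cup\{y_j\}$, $\{y_j\}\cup\{z_j\}$, $\{z_j\}\cup\{t_j\}$, $\{t_j\}\cup\{u_j\}$, $\{u_j\}\cup\{v_j\}$ (all elements of the indicated groups), with primitive relations $v_1+\cdots+v_{p_0}+y_1+\cdots+y_{p_1}=c_2z_2+\cdots+c_{p_2}z_{p_2}+(b_1+1)t_1+\cdots+(b_{p_3}+1)t_{p_3}$, $y_1+\cdots+y_{p_1}+z_1+\cdots+z_{p_2}=u_1+\cdots+u_{p_4}$, $z_1+\cdots+z_{p_2}+t_1+\cdots+t_{p_3}=0$, $t_1+\cdots+t_{p_3}+u_1+\cdots+u_{p_4}=y_1+\cdots+y_{p_1}$,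 $u_1+\cdots+u_{p_4}+v_1+\cdots+v_{p_0}=c_2z_2+\cdots+c_{p_2}z_{p_2}+b_1t_1+\cdots+b_{p_3}t_{p_3}$, with $b_i,c_j\in\mathbb{Z}_{\ge0}$, and $c_2=\min_j c_j$, $b_1=\min_i b_i$. $X=X_\Sigma$. With $D_1,\dots,D_n$ the torus invariant prime divisors, $\mathrm{ch}_2(X)=\frac12\sum D_i^2$. *)

(* Combinatorial model of the toric manifold X_Sigma of the
   paper (Picard rank 3, "pentagon" primitive collections) and of its
   intersection numbers of torus-invariant divisors. *)
From HB Require Import structures.
From mathcomp Require Import all_boot all_order all_algebra.
Set Implicit Arguments. Unset Strict Implicit. Unset Printing Implicit Defensive.
Import Order.TTheory GRing.Theory Num.Theory.
Local Open Scope ring_scope.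

(* Groups of rays: 0 = v, 1 = y, 2 = z, 3 = t, 4 = u. *)
Definition gV : 'I_5 := @Ordinal 5 0 isT.
Definition gY : 'I_5 := @Ordinal 5 1 isT.
Definition gZ : 'I_5 := @Ordinal 5 2 isT.
Definition gT : 'I_5 := @Ordinal 5 3 isT.
Definition gU : 'I_5 := @Ordinal 5 4 isT.

Definition grp_size (p0 p1 p2 p3 p4 : nat) (g : 'I_5) : nat :=
  nth 0%N [:: p0; p1; p2; p3; p4] g.

(* the rays: the k-th (0-based; paper index k+1) ray of group g *)
Definition ray (p : 'I_5 -> nat) := {g : 'I_5 & 'I_(p g)}.
Definition mkr (p : 'I_5 -> nat) (g : 'I_5) (k : 'I_(p g)) : ray p :=
  Tagged (fun g => 'I_(p g)) k.

(* weighted block sum  \sum_{k=1}^{p_g} w(k) * (k-th ray of group g)  (1-based weights) *)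
Definition wsum (p : 'I_5 -> nat) (d : nat) (gen : ray p -> 'rV[int]_d)
  (g : 'I_5) (w : nat -> int) : 'rV[int]_d :=
  \sum_(k < p g) w k.+1 *: gen (mkr k).
Definition blk (p : 'I_5 -> nat) (d : nat) (gen : ray p -> 'rV[int]_d) (g : 'I_5) :=
  wsum gen g (fun _ => 1).

Definition pcs : seq (nat * nat) := [:: (0,1); (1,2); (2,3); (3,4); (4,0)]%N.
Definition prim_coll (p : 'I_5 -> nat) (i j : nat) : {set ray p} :=
  [set r : ray p | (val (tag r) == i) || (val (tag r) == j)].
(* a set of rays spans a cone of Sigma iff it contains no primitive collection *)
Definition is_cone (p : 'I_5 -> nat) (S : {set ray p}) : bool :=
  all (fun ij => ~~ (prim_coll p ij.1 ij.2 \subset S)) pcs.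

Definition smooth_fan (p : 'I_5 -> nat) (d : nat) (gen : ray p -> 'rV[int]_d) :=
  forall S : {set ray p}, is_cone S -> #|S| = d ->
    forall w : 'rV[int]_d, exists! a : {ffun ray p -> int},
      (forall r, r \notin S -> a r = 0) /\ w = \sum_r a r *: gen r.

Definition complete_fan (p : 'I_5 -> nat) (d : nat) (gen : ray p -> 'rV[int]_d) :=
  forall w : 'rV[int]_d, exists S : {set ray p}, is_cone S /\
    exists a : {ffun ray p -> nat},
      (forall r, r \notin S -> a r = 0%N) /\ w = \sum_r (a r)%:Z *: gen r.

(* Intersection numbers D^m = prod_r D_r^(m r) of torus-invariant prime divisors,
   for multisets m of rays of total degree d (= dim X). *)
Definition mdeg (p : 'I_5 -> nat) (m : {ffun ray p -> nat}) : nat := (\sum_r m r)%N.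
Definition msupp (p : 'I_5 -> nat) (m : {ffun ray p -> nat}) : {set ray p} :=
  [set r | (0 < m r)%N].
Definition madd1 (p : 'I_5 -> nat) (m : {ffun ray p -> nat}) (s : ray p) :
  {ffun ray p -> nat} := [ffun r => (m r + (r == s))%N].

Definition intersection_numbers (p : 'I_5 -> nat) (d : nat)
  (gen : ray p -> 'rV[int]_d) (I : {ffun ray p -> nat} -> int) : Prop :=
  [/\ forall m, mdeg m = d -> ~~ is_cone (msupp m) -> I m = 0,
      forall m, mdeg m = d -> (forall r, (m r <= 1)%N) -> is_cone (msupp m) -> I m = 1
    & forall m (u : 'cV[int]_d), (mdeg m).+1 = d ->
        \sum_r (gen r *m u) 0 0 * I (madd1 m r) = 0].

(* 2 (ch_2(X) . S_1) = sum_r D_r^2 . S_1, where S_1 = V(tau_1) and tau_1 is the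
   cone generated by all rays except the first ray of each group. *)
Definition two_ch2_S1 (p : 'I_5 -> nat) (I : {ffun ray p -> nat} -> int) : int :=
  \sum_(s : ray p) I [ffun r => ((val (tagged r) != 0%N) + 2 * (r == s))%N].

From HB Require Import structures.
From mathcomp Require Import all_boot all_order all_algebra.
Import Order.TTheory GRing.Theory Num.Theory.
Local Open Scope ring_scope.
From mathcomp Require Import ring zify.
Set Implicit Arguments. Unset Strict Implicit. Unset Printing Implicit Defensive.

(* Let tau_1 be the cone spanned by all rays except the first ray of each of
   the five groups, S_1 = V(tau_1), and Q(x, y) = D_x . D_y . S_1, so that
   2 (ch_2(X) . S_1) = sum_r Q(r, r).  We compute every Q(r, r).
   - Combinatorics: tau_1 together with two first rays is a cone exactly when
     their groups are not cyclically adjacent; so for a <> b the number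
     Q(first a, first b) is 1 or 0 according to non-adjacency.
   - Smoothness gives, for each maximal cone and each of its rays s, a dual
     vector u with <v_r, u> = delta_(r,s) on the cone; the relation
     sum_r <u, v_r> D_r = 0 then relates the numbers Q(x, .).
   - Pairing u with the primitive relations y + z = u, z + t = 0 and
     u + v = sum c_j z_j + sum b_i t_i determines the coordinates <first g, u>
     from two free ones.  Taking u zero on tau_1 gives the linear equivalences
     D_v = D_u + D_y and D_z = D_t + b_1 D_u + (b_1 + 1) D_y on S_1, hence the
     self-intersections of the five first rays.
   - For s in tau_1, a dual u with <z_1, u> = <v_1, u> = 0 expresses Q(s, s)
     as a quadratic form in the coordinates of u on y_1, t_1, u_1.
   Summing group by group gives the formula of the theorem. *)

Lemma big_ord5 (R : nmodType) (F : 'I_5 -> R) :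
  \sum_(g < 5) F g = F gV + F gY + F gZ + F gT + F gU.
Proof.
rewrite !big_ord_recl big_ord0 addr0 !addrA.
by congr (F _ + F _ + F _ + F _ + F _); apply: val_inj.
Qed.

Section RayCombinatorics.
Variable p : 'I_5 -> nat.
Hypothesis p_pos : forall g, (0 < p g)%N.

Definition first_ray (g : 'I_5) : ray p := mkr (Ordinal (p_pos g)).

Definition tau1 : {set ray p} := [set r : ray p | val (tagged r) != 0%N].

(* Two groups are adjacent when their union is a primitive collection. *)
Definition adjacent (a b : 'I_5) : bool := (a.+1 %% 5 == b)%N || (b.+1 %% 5 == a)%N.

Lemma first_ray_notin_tau1 g : first_ray g \notin tau1.
Proof. by rewrite inE negbK. Qed.

Lemma eq_first_ray_tau1 r g : r \in tau1 -> (r == first_ray g) = false.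
Proof. by move=> rT; apply: contraTF rT => /eqP ->; exact: first_ray_notin_tau1. Qed.

Lemma first_ray_inj : injective first_ray.
Proof. by move=> a b /(congr1 (@tag _ _)). Qed.

Lemma notin_tau1 r : r \notin tau1 -> r = first_ray (tag r).
Proof.
case: r => g k; rewrite inE /= negbK => /eqP k0.
by congr Tagged; apply: val_inj.
Qed.

Lemma setC_tau1 : ~: tau1 = first_ray @: setT.
Proof.
apply/setP => r; rewrite inE; apply/idP/imsetP => [/notin_tau1 -> | [g _ ->]].
  by exists (tag r).
exact: first_ray_notin_tau1.
Qed.

(* tau_1 omits exactly five rays, so with sum p_g = d + 3 it has d - 2 rays. *)
Lemma card_tau1 : (#|tau1| + 5 = \sum_(g < 5) p g)%N.
Proof.
have -> : (\sum_(g < 5) p g)%N = #|{: ray p}|.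
  rewrite card_tagged sumnE big_map big_enum /=.
  by apply: eq_bigr => g _; rewrite card_ord.
rewrite -(cardsC tau1) setC_tau1 card_imset ?cardsT ?card_ord //; exact: first_ray_inj.
Qed.

Lemma sum_rays_split (R : nmodType) (F : ray p -> R) :
  \sum_r F r = \sum_(r in tau1) F r + \sum_(g < 5) F (first_ray g).
Proof.
rewrite (bigID (mem tau1)) /=; congr (_ + _).
rewrite (eq_bigl (mem (~: tau1))) => [|r]; last by rewrite !inE.
rewrite setC_tau1 big_imset /= => [|x y _ _ /first_ray_inj //].
by apply: eq_bigl => g; rewrite inE.
Qed.

Lemma sum_rays_by_group (R : nmodType) (F : ray p -> R) :
  \sum_r F r = \sum_(g < 5) \sum_(k < p g) F (mkr k).
Proof.
rewrite (sig_big_dep xpredT (fun _ _ => true) (fun g (k : 'I_(p g)) => F (mkr k))) /=.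
by apply: eq_bigr => -[g k].
Qed.

Lemma sub_prim_coll (i j : 'I_5) (S : {set ray p}) : tau1 \subset S ->
  (prim_coll p i j \subset S) = (first_ray i \in S) && (first_ray j \in S).
Proof.
move=> tauS; apply/idP/andP => [/subsetP sub | [Si Sj]].
  by split; apply: sub; rewrite inE eqxx ?orbT.
apply/subsetP => r; rewrite inE => Hr.
have [rT|/notin_tau1 ->] := boolP (r \in tau1); first exact: (subsetP tauS).
case/orP: Hr => /eqP e; [rewrite (_ : tag r = i) | rewrite (_ : tag r = j)] => //.
  by apply: val_inj.
by apply: val_inj.
Qed.

Lemma cone_tau1_pair a b :
  is_cone (tau1 :|: [set first_ray a; first_ray b]) = ~~ adjacent a b.
Proof.
have tauS := subsetUl tau1 [set first_ray a; first_ray b].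
have inS g : (first_ray g \in tau1 :|: [set first_ray a; first_ray b]) = (g == a) || (g == b).
  by rewrite in_setU (negbTE (first_ray_notin_tau1 g)) !inE !(inj_eq first_ray_inj).
rewrite /is_cone /pcs /= (sub_prim_coll gV gY tauS) (sub_prim_coll gY gZ tauS).
rewrite (sub_prim_coll gZ gT tauS) (sub_prim_coll gT gU tauS) (sub_prim_coll gU gV tauS) !inS.
by clear; case: a b => [[|[|[|[|[|a]]]]] ha] [[|[|[|[|[|b]]]]] hb].
Qed.

Lemma card_tau1_pair a b : a != b ->
  #|tau1 :|: [set first_ray a; first_ray b]| = (#|tau1| + 2)%N.
Proof.
move=> ab; rewrite cardsU cards2 (inj_eq first_ray_inj) ab.
suff -> : tau1 :&: [set first_ray a; first_ray b] = set0 by rewrite cards0 subn0.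
apply/setP => r; rewrite in_setI in_set0.
by case: (boolP (r \in tau1)) => //= rT; rewrite !inE !eq_first_ray_tau1.
Qed.

Definition tail_weight (s : ray p) (g : 'I_5) (w : nat -> int) : int :=
  \sum_(k < p g | val k != 0%N) w k.+1 * (mkr k == s)%:Z.

Lemma tail_weight_mkr g0 (k0 : 'I_(p g0)) g w :
  tail_weight (mkr k0) g w = if (g0 == g) && (val k0 != 0%N) then w (val k0).+1 else 0.
Proof.
rewrite /tail_weight; case: (eqVneq g0 g) => [<-|ne] /=; last first.
  rewrite big1 // => k _; rewrite (_ : mkr k == mkr k0 = false) ?mulr0 //.
  by apply: contraNF ne => /eqP/(congr1 (@tag _ _)) /= ->.
under eq_bigr do rewrite /mkr eq_Tagged.
have [k0_0|k0_0] := boolP (val k0 != 0%N).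
  by rewrite (bigD1 k0) //= eqxx mulr1 big1 ?addr0 // => k /andP[_ /negbTE ->]; rewrite mulr0.
rewrite big1 // => k k_0; rewrite (_ : k == k0 = false) ?mulr0 //.
by apply: contraNF k0_0 => /eqP <-.
Qed.

Lemma tail_weight_first_ray h g w : tail_weight (first_ray h) g w = 0.
Proof. by rewrite /first_ray tail_weight_mkr andbF. Qed.

End RayCombinatorics.

Section Multisets.
Variable p : 'I_5 -> nat.

(* The multiset of rays of a set A, i.e. the cycle D_A = prod_(r in A) D_r. *)
Definition indicator (A : {set ray p}) : {ffun ray p -> nat} :=
  [ffun r => (r \in A : nat)].

Lemma mdeg_indicator A : mdeg (indicator A) = #|A|.
Proof.
rewrite /mdeg -sum1_card [in RHS]big_mkcond /=.
by apply: eq_bigr => r _; rewrite ffunE; case: (r \in A).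
Qed.

Lemma msupp_indicator A : msupp (indicator A) = A.
Proof. by apply/setP => r; rewrite !inE ffunE; case: (r \in A). Qed.

Lemma mdeg_madd1 (m : {ffun ray p -> nat}) s : mdeg (madd1 m s) = (mdeg m).+1.
Proof.
rewrite /mdeg; under eq_bigr do rewrite ffunE.
have one : (\sum_r (r == s) = 1)%N by rewrite (bigD1 s) //= eqxx big1 // => r /negbTE ->.
by rewrite big_split /= one addn1.
Qed.

Lemma madd1C (m : {ffun ray p -> nat}) x y : madd1 (madd1 m x) y = madd1 (madd1 m y) x.
Proof. by apply/ffunP => r; rewrite !ffunE -!addnA [((r == x) + _)%N]addnC. Qed.

End Multisets.

(* The duality pairing <x, u> between N = Z^d (rows) and M (columns). *)
Definition pairing (d : nat) (u : 'cV[int]_d) (x : 'rV[int]_d) : int := (x *m u) 0 0.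

Lemma pairingD d (u : 'cV[int]_d) x y : pairing u (x + y) = pairing u x + pairing u y.
Proof. by rewrite /pairing mulmxDl mxE. Qed.

Lemma pairingZ d (u : 'cV[int]_d) a x : pairing u (a *: x) = a * pairing u x.
Proof. by rewrite /pairing -scalemxAl mxE. Qed.

Lemma pairing0 d (u : 'cV[int]_d) : pairing u 0 = 0.
Proof. by rewrite /pairing mul0mx mxE. Qed.

Lemma pairing_sum d (u : 'cV[int]_d) (J : finType) (P : pred J) (F : J -> 'rV[int]_d) :
  pairing u (\sum_(j | P j) F j) = \sum_(j | P j) pairing u (F j).
Proof. by rewrite /pairing mulmx_suml summxE. Qed.

(* In a smooth fan the generators of a maximal cone S form a basis of N, so
   for every s there is u in M with <v_r, u> = delta_(r,s) for r in S. *)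
Lemma smooth_dual p d (gen : ray p -> 'rV[int]_d) (S : {set ray p}) s :
  smooth_fan gen -> is_cone S -> #|S| = d ->
  exists u : 'cV[int]_d, forall r, r \in S -> pairing u (gen r) = (r == s)%:Z.
Proof.
move=> smooth coneS cardS.
have coord j : exists a : {ffun ray p -> int},
    (forall r, r \notin S -> a r = 0) /\ delta_mx 0 j = \sum_r a r *: gen r.
  by have [a [Ha _]] := smooth S coneS cardS (delta_mx 0 j); exists a.
have [A HA] := fin_all_exists coord.
exists (\col_j A j s) => r rS.
have [a0 [_ uniq_a0]] := smooth S coneS cardS (gen r).
have e1 : a0 = [ffun x => \sum_j gen r 0 j * A j x].
  apply: uniq_a0; split.
    by move=> x xS; rewrite ffunE big1 // => j _; rewrite (proj1 (HA j)) // mulr0.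
  under eq_bigr do rewrite ffunE scaler_suml.
  rewrite exchange_big /= [LHS]row_sum_delta; apply: eq_bigr => j _.
  by rewrite (proj2 (HA j)) scaler_sumr; apply: eq_bigr => x _; rewrite scalerA.
have e2 : a0 = [ffun x => (x == r)%:Z].
  apply: uniq_a0; split.
    by move=> x xS; rewrite ffunE; case: eqP => // e; rewrite e rS in xS.
  rewrite (bigD1 r) //= ffunE eqxx scale1r big1 ?addr0 // => x /negbTE xr.
  by rewrite ffunE xr scale0r.
have := congr1 (fun a : {ffun ray p -> int} => a s) e1.
rewrite e2 !ffunE eq_sym /pairing mxE => ->.
by apply: eq_bigr => j _; rewrite mxE.
Qed.

Section IntersectionsOnS1.
Variable p : 'I_5 -> nat.
Hypothesis p_pos : forall g, (0 < p g)%N.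
Variable d : nat.
Variable gen : ray p -> 'rV[int]_d.
Hypothesis smooth : smooth_fan gen.
Variable I : {ffun ray p -> nat} -> int.
Hypothesis hI : intersection_numbers gen I.
Hypothesis dim_S1 : (#|tau1 p| + 2)%N = d.

Local Notation tau1 := (tau1 p).
Local Notation first_ray := (first_ray p_pos).

(* Q(x, y) = D_x . D_y . S_1. *)
Definition dotS1 (x y : ray p) : int := I (madd1 (madd1 (indicator tau1) x) y).

Lemma dotS1C x y : dotS1 x y = dotS1 y x.
Proof. by rewrite /dotS1 madd1C. Qed.

Lemma dotS1_first_pair a b : a != b ->
  dotS1 (first_ray a) (first_ray b) = (~~ adjacent a b)%:Z.
Proof.
move=> ab; have [vanish unit _] := hI; rewrite /dotS1.
have -> : madd1 (madd1 (indicator tau1) (first_ray a)) (first_ray b) =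
          indicator (tau1 :|: [set first_ray a; first_ray b]).
  apply/ffunP => r; rewrite !ffunE in_setU in_set2.
  have [rT|/notin_tau1 ->] := boolP (r \in tau1).
    by rewrite !(eq_first_ray_tau1 p_pos).
  rewrite !(inj_eq (@first_ray_inj _ p_pos)).
  by case: eqP => [->|_]; [rewrite (negbTE ab) | case: (_ == b)].
rewrite -(cone_tau1_pair p_pos); have deg := etrans (card_tau1_pair p_pos ab) dim_S1.
case: (boolP (is_cone _)) => cone.
  by rewrite unit ?msupp_indicator ?mdeg_indicator // => r; rewrite ffunE; case: (_ \in _).
by rewrite vanish ?msupp_indicator ?mdeg_indicator.
Qed.

Definition dual_on_tau1 (u : 'cV[int]_d) (s : ray p) : Prop :=
  forall r, r \in tau1 -> pairing u (gen r) = (r == s)%:Z.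

Definition first_coord (u : 'cV[int]_d) (g : 'I_5) : int := pairing u (gen (first_ray g)).

Lemma dual_on_cone a b s : a != b -> ~~ adjacent a b ->
  exists u, [/\ dual_on_tau1 u s, first_coord u a = (first_ray a == s)%:Z
              & first_coord u b = (first_ray b == s)%:Z].
Proof.
rewrite -(cone_tau1_pair p_pos) => ab cone.
have [u hu] := smooth_dual s smooth cone (etrans (card_tau1_pair p_pos ab) dim_S1).
exists u; split; rewrite /first_coord.
- by move=> r rT; apply: hu; rewrite in_setU rT.
- by apply: hu; rewrite !inE eqxx orbT.
- by apply: hu; rewrite !inE eqxx !orbT.
Qed.

(* The linear relation sum_r <v_r, u> D_r = 0, cut down by D_tau1 . D_x. *)
Lemma dotS1_relation x u s : dual_on_tau1 u s ->
  (s \in tau1)%:Z * dotS1 x s + \sum_(g < 5) first_coord u g * dotS1 x (first_ray g) = 0.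
Proof.
move=> hu; have [_ _ rel] := hI.
have deg : (mdeg (madd1 (indicator tau1) x)).+1 = d.
  by rewrite mdeg_madd1 mdeg_indicator -dim_S1 addn2.
have := rel _ u deg; rewrite (sum_rays_split p_pos); apply: etrans; congr (_ + _).
rewrite (eq_bigr (fun r => (r == s)%:Z * dotS1 x r)) => [|r rT]; last by rewrite -hu.
have [sT|sT] := boolP (s \in tau1).
  by rewrite (bigD1 s) //= eqxx mul1r big1 ?addr0 // => r /andP[_ /negbTE ->]; rewrite mul0r.
rewrite mul0r big1 // => r rT; rewrite (_ : r == s = false) ?mul0r //.
by apply: contraNF sT => /eqP <-.
Qed.

Lemma pairing_wsum u s g w : dual_on_tau1 u s ->
  pairing u (wsum gen g w) = w 1%N * first_coord u g + tail_weight s g w.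
Proof.
move=> hu; rewrite /wsum pairing_sum (bigD1 (Ordinal (p_pos g))) //= pairingZ.
congr (_ + _); rewrite (eq_bigl (fun k : 'I_(p g) => val k != 0%N)) => [|k]; last first.
  by rewrite -val_eqE.
by apply: eq_bigr => k k_0; rewrite pairingZ hu // inE.
Qed.

(* The self-intersections in group g: the first ray plus its tail, reindexed
   by the paper's 1-based index j = 2, ..., p_g. *)
Lemma sum_group_self g (F : nat -> int) :
  (forall k : 'I_(p g), val k != 0%N -> dotS1 (mkr k) (mkr k) = F (val k).+1) ->
  \sum_(k < p g) dotS1 (mkr k) (mkr k)
    = dotS1 (first_ray g) (first_ray g) + \sum_(2 <= j < (p g).+1) F j.
Proof.
move=> tailF; rewrite (bigD1 (Ordinal (p_pos g))) //=; congr (_ + _).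
rewrite (eq_bigl (fun k : 'I_(p g) => val k != 0%N)) => [|k]; last by rewrite -val_eqE.
rewrite (eq_bigr (fun k : 'I_(p g) => F (val k).+1)) => [|k]; last exact: tailF.
rewrite -(big_mkord (fun k => k != 0%N) (fun k => F k.+1)).
case: (p g) => [|n]; first by rewrite !big_geq.
rewrite big_ltn_cond //= [RHS]big_add1 /= big_nat_cond [RHS]big_nat_cond.
by apply: eq_bigl => -[].
Qed.

Lemma two_ch2_S1_dotS1 : two_ch2_S1 I = \sum_s dotS1 s s.
Proof.
apply: eq_bigr => s _; rewrite /dotS1; congr I; apply/ffunP => r.
by rewrite !ffunE inE mul2n -addnn addnA.
Qed.

Section PrimitiveRelations.
Variables b c : nat -> nat.

Definition unit_weight : nat -> int := fun _ => 1.
Definition c_weight : nat -> int := fun j => if j == 1%N then 0 else (c j)%:Z.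
Definition b_weight : nat -> int := fun i => (b i)%:Z.

Hypothesis rel_YZ : blk gen gY + blk gen gZ = blk gen gU.
Hypothesis rel_ZT : blk gen gZ + blk gen gT = 0.
Hypothesis rel_UV : blk gen gU + blk gen gV = wsum gen gZ c_weight + wsum gen gT b_weight.

Lemma pairing_relations u s : dual_on_tau1 u s ->
  [/\ first_coord u gY + tail_weight s gY unit_weight
        + (first_coord u gZ + tail_weight s gZ unit_weight)
        = first_coord u gU + tail_weight s gU unit_weight,
      first_coord u gZ + tail_weight s gZ unit_weight
        + (first_coord u gT + tail_weight s gT unit_weight) = 0 &
      first_coord u gU + tail_weight s gU unit_weight
        + (first_coord u gV + tail_weight s gV unit_weight)
        = tail_weight s gZ c_weight
          + ((b 1%N)%:Z * first_coord u gT + tail_weight s gT b_weight)].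
Proof.
move=> hu; have blkE g : pairing u (blk gen g) = first_coord u g + tail_weight s g unit_weight.
  by rewrite /blk (pairing_wsum _ _ hu) mul1r.
split.
- by have := congr1 (pairing u) rel_YZ; rewrite !pairingD !blkE.
- by have := congr1 (pairing u) rel_ZT; rewrite pairingD !blkE pairing0.
- have := congr1 (pairing u) rel_UV; rewrite !pairingD !blkE !(pairing_wsum _ _ hu).
  by rewrite /c_weight /= mul0r add0r.
Qed.

Lemma first_coords_vanishing u h : dual_on_tau1 u (first_ray h) ->
  [/\ first_coord u gZ = - first_coord u gT,
      first_coord u gU = (b 1%N)%:Z * first_coord u gT - first_coord u gV &
      first_coord u gY = ((b 1%N)%:Z + 1) * first_coord u gT - first_coord u gV].
Proof.
move=> hu; have [] := pairing_relations hu; rewrite !(tail_weight_first_ray p_pos) !addr0.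
move=> eYZ eZT eUV; have eZ : first_coord u gZ = - first_coord u gT by lia.
by split=> //; [lia | rewrite mulrDl mul1r; lia].
Qed.

Lemma dotS1_equiv_V x :
  dotS1 x (first_ray gV) = dotS1 x (first_ray gU) + dotS1 x (first_ray gY).
Proof.
have [u [hu uV uT]] := dual_on_cone (first_ray gV) (isT : gV != gT) isT.
have [eZ eU eY] := first_coords_vanishing hu.
rewrite !(inj_eq (@first_ray_inj _ p_pos)) /= in uV uT.
have := dotS1_relation x hu; rewrite (negbTE (first_ray_notin_tau1 _ _)) big_ord5.
by rewrite eY eU eZ uV uT; lia.
Qed.

Lemma dotS1_equiv_Z x :
  dotS1 x (first_ray gZ) = dotS1 x (first_ray gT) + (b 1%N)%:Z * dotS1 x (first_ray gU)
                           + ((b 1%N)%:Z + 1) * dotS1 x (first_ray gY).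
Proof.
have [u [hu uT uV]] := dual_on_cone (first_ray gT) (isT : gT != gV) isT.
have [eZ eU eY] := first_coords_vanishing hu.
rewrite !(inj_eq (@first_ray_inj _ p_pos)) /= in uV uT.
have := dotS1_relation x hu; rewrite (negbTE (first_ray_notin_tau1 _ _)) big_ord5.
by rewrite eY eU eZ uV uT; lia.
Qed.

Lemma dotS1_VV : dotS1 (first_ray gV) (first_ray gV) = 0.
Proof. by rewrite dotS1_equiv_V !(@dotS1_first_pair gV). Qed.

Lemma dotS1_YY : dotS1 (first_ray gY) (first_ray gY) = -1.
Proof.
have := dotS1_equiv_V (first_ray gY).
by rewrite (@dotS1_first_pair gY gV) ?(@dotS1_first_pair gY gU) //=; lia.
Qed.

Lemma dotS1_ZZ : dotS1 (first_ray gZ) (first_ray gZ) = (b 1%N)%:Z.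
Proof.
rewrite dotS1_equiv_Z (@dotS1_first_pair gZ gT) ?(@dotS1_first_pair gZ gU) //.
by rewrite ?(@dotS1_first_pair gZ gY) //=; lia.
Qed.

Lemma dotS1_TT : dotS1 (first_ray gT) (first_ray gT) = - ((b 1%N)%:Z + 1).
Proof.
have := dotS1_equiv_Z (first_ray gT).
rewrite (@dotS1_first_pair gT gZ) ?(@dotS1_first_pair gT gU) ?(@dotS1_first_pair gT gY) //=.
by lia.
Qed.

Lemma dotS1_UU : dotS1 (first_ray gU) (first_ray gU) = -1.
Proof.
have := dotS1_equiv_V (first_ray gU).
by rewrite (@dotS1_first_pair gU gV) ?(@dotS1_first_pair gU gY) //=; lia.
Qed.

(* For s in tau_1, the coordinates on t_1, u_1, y_1 of the vector u dual to s
   on the maximal cone tau_1 + z_1 + v_1. *)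
Definition coordT (s : ray p) : int :=
  - (tail_weight s gZ unit_weight + tail_weight s gT unit_weight).
Definition coordU (s : ray p) : int :=
  tail_weight s gZ c_weight + (b 1%N)%:Z * coordT s + tail_weight s gT b_weight
  - tail_weight s gU unit_weight - tail_weight s gV unit_weight.
Definition coordY (s : ray p) : int :=
  coordU s + tail_weight s gU unit_weight - tail_weight s gY unit_weight
  - tail_weight s gZ unit_weight.

(* Q(s, s) = sum_(g, h) <first g, u> <first h, u> Q(first g, first h), and
   only the block of y_1, t_1, u_1 survives. *)
Lemma dotS1_tau1_self s : s \in tau1 ->
  dotS1 s s = - coordY s ^+ 2 - coordU s ^+ 2 - ((b 1%N)%:Z + 1) * coordT s ^+ 2
              + 2 * coordY s * coordT s + 2 * coordY s * coordU s.
Proof.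
move=> sT.
have [u [hu uZ uV]] := dual_on_cone s (isT : gZ != gV) isT.
rewrite !(eq_sym _ s) !(eq_first_ray_tau1 p_pos) // in uZ uV.
have [eYZ eZT eUV] := pairing_relations hu.
have aT : first_coord u gT = coordT s by rewrite /coordT; lia.
have aU : first_coord u gU = coordU s by rewrite /coordU -aT; lia.
have aY : first_coord u gY = coordY s by rewrite /coordY -aU; lia.
have solve h : dotS1 (first_ray h) s =
    - \sum_(g < 5) first_coord u g * dotS1 (first_ray h) (first_ray g).
  apply/eqP; rewrite -addr_eq0; have := dotS1_relation (first_ray h) hu.
  by rewrite sT mul1r => ->.
have := dotS1_relation s hu; rewrite sT mul1r big_ord5 !(dotS1C s) !solve !big_ord5.
rewrite uZ uV aT aU aY dotS1_YY dotS1_TT dotS1_UU.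
rewrite (@dotS1_first_pair gY gT) ?(@dotS1_first_pair gY gU) ?(@dotS1_first_pair gT gY) //.
rewrite ?(@dotS1_first_pair gT gU) ?(@dotS1_first_pair gU gY) ?(@dotS1_first_pair gU gT) //=.
by move/eqP; rewrite addr_eq0 => /eqP ->; ring.
Qed.

Lemma dotS1_tail_V (k : 'I_(p gV)) : val k != 0%N -> dotS1 (mkr k) (mkr k) = 0.
Proof.
move=> k_tail; rewrite dotS1_tau1_self ?inE // /coordY /coordU /coordT !tail_weight_mkr k_tail.
by rewrite /unit_weight /c_weight /b_weight /= ?eqSS ?(negbTE k_tail); ring.
Qed.

Lemma dotS1_tail_Y (k : 'I_(p gY)) : val k != 0%N -> dotS1 (mkr k) (mkr k) = -1.
Proof.
move=> k_tail; rewrite dotS1_tau1_self ?inE // /coordY /coordU /coordT !tail_weight_mkr k_tail.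
by rewrite /unit_weight /c_weight /b_weight /= ?eqSS ?(negbTE k_tail); ring.
Qed.

Lemma dotS1_tail_Z (k : 'I_(p gZ)) : val k != 0%N ->
  dotS1 (mkr k) (mkr k) = (b 1%N)%:Z - 2 * (c (val k).+1)%:Z.
Proof.
move=> k_tail; rewrite dotS1_tau1_self ?inE // /coordY /coordU /coordT !tail_weight_mkr k_tail.
by rewrite /unit_weight /c_weight /b_weight /= ?eqSS ?(negbTE k_tail); ring.
Qed.

Lemma dotS1_tail_T (k : 'I_(p gT)) : val k != 0%N ->
  dotS1 (mkr k) (mkr k) = (b 1%N)%:Z - 2 * (b (val k).+1)%:Z - 1.
Proof.
move=> k_tail; rewrite dotS1_tau1_self ?inE // /coordY /coordU /coordT !tail_weight_mkr k_tail.
by rewrite /unit_weight /c_weight /b_weight /= ?eqSS ?(negbTE k_tail); ring.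
Qed.

Lemma dotS1_tail_U (k : 'I_(p gU)) : val k != 0%N -> dotS1 (mkr k) (mkr k) = -1.
Proof.
move=> k_tail; rewrite dotS1_tau1_self ?inE // /coordY /coordU /coordT !tail_weight_mkr k_tail.
by rewrite /unit_weight /c_weight /b_weight /= ?eqSS ?(negbTE k_tail); ring.
Qed.

Lemma two_ch2_S1_value :
  two_ch2_S1 I =
    - (p gY)%:Z - (p gU)%:Z + (b 1%N)%:Z * (p gZ)%:Z
    - 2 * (\sum_(2 <= j < (p gZ).+1) (c j)%:Z)
    - ((b 1%N)%:Z + 1)
    + \sum_(2 <= i < (p gT).+1) ((b 1%N)%:Z - 2 * (b i)%:Z - 1).
Proof.
rewrite two_ch2_S1_dotS1 sum_rays_by_group big_ord5.
rewrite (sum_group_self (F := fun=> 0) dotS1_tail_V).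
rewrite (sum_group_self (F := fun=> -1) dotS1_tail_Y).
rewrite (sum_group_self (F := fun j => (b 1%N)%:Z - 2 * (c j)%:Z) dotS1_tail_Z).
rewrite (sum_group_self (F := fun i => (b 1%N)%:Z - 2 * (b i)%:Z - 1) dotS1_tail_T).
rewrite (sum_group_self (F := fun=> -1) dotS1_tail_U).
rewrite dotS1_VV dotS1_YY dotS1_ZZ dotS1_TT dotS1_UU big1_eq.
rewrite !(sumr_const_nat _ _ (-1)) sumrB (sumr_const_nat _ _ (b 1%N)%:Z) -mulr_sumr.
have count_tail (x : int) n : (0 < n)%N -> x *+ (n.+1 - 2) = x * (n%:Z - 1).
  by move=> n_pos; rewrite -mulr_natr natz -predn_int //; congr (_ * Posz _); lia.
by rewrite !count_tail //; ring.
Qed.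

End PrimitiveRelations.
End IntersectionsOnS1.

Theorem mainTheorem4 (p0 p1 p2 p3 p4 : nat)
  (hp0 : (0 < p0)%N) (hp1 : (0 < p1)%N) (hp2 : (0 < p2)%N)
  (hp3 : (0 < p3)%N) (hp4 : (0 < p4)%N)
  (d : nat) (hd : (p0 + p1 + p2 + p3 + p4 = d + 3)%N)
  (gen : ray (grp_size p0 p1 p2 p3 p4) -> 'rV[int]_d)
  (b c : nat -> nat)
  (hb : forall i, (1 <= i <= p3)%N -> (b 1 <= b i)%N)
  (hc : forall j, (2 <= j <= p2)%N -> (c 2 <= c j)%N)
  (ginj : injective gen)
  (rel1 : blk gen gV + blk gen gY =
          wsum gen gZ (fun j => if j == 1%N then 0 else (c j)%:Z)
          + wsum gen gT (fun i => (b i)%:Z + 1))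
  (rel2 : blk gen gY + blk gen gZ = blk gen gU)
  (rel3 : blk gen gZ + blk gen gT = 0)
  (rel4 : blk gen gT + blk gen gU = blk gen gY)
  (rel5 : blk gen gU + blk gen gV =
          wsum gen gZ (fun j => if j == 1%N then 0 else (c j)%:Z)
          + wsum gen gT (fun i => (b i)%:Z))
  (hsmooth : smooth_fan gen) (hcomplete : complete_fan gen)
  (I : {ffun ray (grp_size p0 p1 p2 p3 p4) -> nat} -> int)
  (hI : intersection_numbers gen I) :
  two_ch2_S1 I =
    - (p1%:Z) - (p4%:Z) + (b 1%N)%:Z * (p2%:Z)
    - 2 * (\sum_(2 <= j < p2.+1) (c j)%:Z)
    - ((b 1%N)%:Z + 1)
    + \sum_(2 <= i < p3.+1) ((b 1%N)%:Z - 2 * (b i)%:Z - 1).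
Proof.
have p_pos g : (0 < grp_size p0 p1 p2 p3 p4 g)%N by case: g => [[|[|[|[|[|g]]]]] hg].
have dim_S1 : (#|tau1 (grp_size p0 p1 p2 p3 p4)| + 2)%N = d.
  by have := card_tau1 p_pos; rewrite big_ord5 /grp_size /=; lia.
exact: (two_ch2_S1_value p_pos hsmooth hI dim_S1 (b := b) (c := c) rel2 rel3 rel5).
Qed.
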